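(* Assume the seeds are i.i.d. uniform on $[n]$. If $n\ge6$ is even and $l$ is an integer with $2\le l\le n/2-1$, then $$c:=\limsup_{m\to\infty}\frac{\log\bigl(1-p_1(n,m,l)\bigr)}{m}<0$$ (with the convention $\log 0=-\infty$).
   Context: Candidates $[n]$, $m$ voters; voter $j$ has the clockwise oriented preference list $(s_j,s_j+1,\dots,n,1,\dots,s_j-1)$ with seed $s_j$; seeds are independent and uniform on $[n]$. In an election among a non-empty $S\subseteq[n]$ each voter votes for the first candidate of $S$ in its list; $\Xi_S(i)$ is the number of votes for $i$. Two-round election with partition $(A,B)$ of $[n]$: the winner of $A$ is the $a\in A$ with $\Xi_A(a)>\Xi_A(a')$ for all other $a'\in A$ (if none exists, nobody wins the election); likewise for $B$; between the two first-round winners $a,b$, $a$ wins iff $\Xi_{\{a,b\}}(a)>\Xi_{\{a,b\}}(b)$ (ties: nobody wins). For even $n$ and $2\le l<n/2$, $A^{(1,n,l)}=\{1,\dots,l\}\cup\{l+2i:1\le i\le(n-2l)/2\}$, $B^{(1,n,l)}=[n]\setminus A^{(1,n,l)}$, and $p_1(n,m,l)$ is the probability that candidate $1$ wins the two-round election with partition $(A^{(1,n,l)},B^{(1,n,l)})$. *)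

From HB Require Import structures.
From mathcomp Require Import all_boot all_order all_algebra.
From mathcomp Require Import all_classical all_reals all_analysis.
Set Implicit Arguments. Unset Strict Implicit. Unset Printing Implicit Defensive.
Import Order.TTheory GRing.Theory Num.Theory.

(* Candidates [n] = {1,...,n} are represented by 'I_n : the ordinal c stands
   for candidate c+1.  A seed s : 'I_n stands for seed s+1.  A profile of
   seeds for m voters is an element of {ffun 'I_m -> 'I_n}. *)

Section Election.
Variables (n m : nat).

(* position (0-based) of candidate c in the clockwise list of seed s:
   (s, s+1, ..., n, 1, ..., s-1) *)
Definition pos (s c : 'I_n) : nat := (c + n - s) %% n.

Definition votes_for (S : {set 'I_n}) (s c : 'I_n) : bool :=
  (c \in S) && [forall c' in S, pos s c <= pos s c'].

Definition Xi (seeds : {ffun 'I_m -> 'I_n}) (S : {set 'I_n}) (i : 'I_n) : nat :=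
  #|[set j : 'I_m | votes_for S (seeds j) i]|.

Definition is_winner (seeds : {ffun 'I_m -> 'I_n}) (S : {set 'I_n}) (a : 'I_n) : bool :=
  (a \in S) && [forall a' in S, (a' != a) ==> (Xi seeds S a' < Xi seeds S a)].

Definition wins_two_round (seeds : {ffun 'I_m -> 'I_n}) (A B : {set 'I_n}) (x : 'I_n) : bool :=
  [exists a, exists b,
     [&& is_winner seeds A a, is_winner seeds B b &
      ((x == a) && (Xi seeds [set a; b] b < Xi seeds [set a; b] a))
      || ((x == b) && (Xi seeds [set a; b] a < Xi seeds [set a; b] b))]].
End Election.

(* A^{(1,n,l)} = {1..l} ∪ {l+2i : 1 <= i <= (n-2l)/2} ; candidate c ~ c+1 *)
Definition Aset (n l : nat) : {set 'I_n} :=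
  [set c : 'I_n | (c.+1 <= l) ||
     [exists i : 'I_n.+1, [&& 1 <= i, i <= (n - 2 * l)./2 & c.+1 == l + 2 * i]]].
Definition Bset (n l : nat) : {set 'I_n} := ~: Aset n l.

(* p_1(n,m,l): seeds i.i.d. uniform on [n], i.e. the uniform distribution on
   the n^m seed profiles; candidate 1 is the ordinal 0. *)
Definition p1 (R : realType) (n m l : nat) : R :=
  match n as n0 return (nat -> R) with
  | 0 => fun _ => 0%R
  | n'.+1 => fun l =>
      (#|[set seeds : {ffun 'I_m -> 'I_n'.+1} |
          wins_two_round seeds (Aset n'.+1 l) (Bset n'.+1 l) ord0]|%:R
       / (n'.+1 ^ m)%N%:R)%R
  end l.

Definition elog (R : realType) (x : R) : \bar R :=
  if x == 0%R then -oo%E else (ln x)%:E.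

From HB Require Import structures.
From mathcomp Require Import all_boot all_order all_algebra.
From mathcomp Require Import all_classical all_reals all_analysis.
From mathcomp Require Import zify ring lra.
Set Implicit Arguments. Unset Strict Implicit. Unset Printing Implicit Defensive.
Import Order.TTheory GRing.Theory Num.Theory.

(* Candidate 1 wins as soon as three plurality contests go its way: it beats
   every other member of A, candidate l+1 beats every other member of B, and 1
   beats l+1 in the final.  In each contest the favourite is the first choice of
   a whole arc of at least l+1 seeds, while every opponent is the first choice
   of at most l seeds.  An exponential-moment bound shows that, for m i.i.d.
   uniform seeds, a fixed opponent gets at least as many votes as the favourite
   with probability at most (1 - 1/(n(4l+2)))^m; a union bound over the at most
   2n+1 contests gives 1 - p_1 <= (2n+1) (1 - 1/(n(4l+2)))^m. *)

Lemma card_ord_lt (n k : nat) : k <= n -> #|[set i : 'I_n | i < k]| = k.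
Proof.
move=> le_kn; rewrite -sum1_card (eq_bigl (fun i : 'I_n => i < k)) => [|i]; last by rewrite inE.
by rewrite (big_ord_narrow le_kn) sum1_card card_ord.
Qed.

Lemma card_bigcup_le (I T : finType) (P : pred I) (F : I -> {set T}) :
  #|\bigcup_(i | P i) F i| <= \sum_(i | P i) #|F i|.
Proof.
elim/big_rec2: _ => [|i U k _ le_Uk]; first by rewrite cards0.
by rewrite (leq_trans (leq_card_setU _ _)) ?leq_add2l.
Qed.

Lemma ord_gt0 n (d : 'I_n.+1) : d != ord0 -> 0 < d.
Proof. by rewrite lt0n; apply: contra => /eqP d0; apply/eqP/val_inj. Qed.

Definition hits (T : finType) (m : nat) (f : {ffun 'I_m -> T}) (P : {set T}) : nat :=
  #|[set j | f j \in P]|.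

Section CyclicPosition.
Variable n' : nat.
Local Notation n := n'.+1.
Implicit Types (s c d : 'I_n) (S : {set 'I_n}).

Variant pos_spec s c : nat -> Type :=
| PosGe of s <= c : pos_spec s c (c - s)
| PosLt of c < s : pos_spec s c (c + n - s).

Lemma posP s c : pos_spec s c (pos s c).
Proof.
rewrite /pos; have := ltn_ord s; have := ltn_ord c.
case: (leqP s c) => [le_sc|lt_cs] lt_cn lt_sn.
  by rewrite (_ : c + n - s = c - s + n) ?modnDr ?modn_small; [constructor | lia | lia].
by rewrite modn_small; [constructor | lia].
Qed.

Lemma pos_lt s c : pos s c < n.
Proof. by rewrite /pos ltn_pmod. Qed.

Lemma pos_inj s : injective (pos s).
Proof.
move=> c c' e; apply: val_inj; move: e; have := ltn_ord s.
have := ltn_ord c; have := ltn_ord c'.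
by case: (posP s c); case: (posP s c') => /= *; lia.
Qed.

Lemma pos_seed_inj c : injective (fun s => pos s c).
Proof.
move=> s s' e; apply: val_inj; move: e; have := ltn_ord s.
have := ltn_ord c; have := ltn_ord s'.
by case: (posP s c); case: (posP s' c) => /= *; lia.
Qed.

Lemma pos_add s d c : pos s d <= pos s c -> pos s d + pos d c = pos s c.
Proof.
have := ltn_ord s; have := ltn_ord c; have := ltn_ord d.
by case: (posP s c); case: (posP s d); case: (posP d c) => *; lia.
Qed.

Lemma pos_add_wrap s d c : pos s c < pos s d -> pos s d + pos d c = pos s c + n.
Proof.
have := ltn_ord s; have := ltn_ord c; have := ltn_ord d.
by case: (posP s c); case: (posP s d); case: (posP d c) => *; lia.
Qed.

Lemma card_pos_lt c k : k <= n -> #|[set s | pos s c < k]| = k.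
Proof.
move=> le_kn; pose g s := Ordinal (pos_lt s c).
have g_inj : injective g by move=> s s' /(congr1 val) /pos_seed_inj.
rewrite -[RHS](card_ord_lt le_kn) -(card_preimset [set i : 'I_n | i < k] g_inj).
by apply: eq_card => s; rewrite !inE.
Qed.

Definition voters S c : {set 'I_n} := [set s | votes_for S s c].

Lemma Xi_hits m (f : {ffun 'I_m -> 'I_n}) S c : Xi f S c = hits f (voters S c).
Proof. by apply: eq_card => j; rewrite !inE. Qed.

Lemma votes_for_uniq S s c c' : votes_for S s c -> votes_for S s c' -> c = c'.
Proof.
move=> /andP[cS /forall_inP le_c] /andP[c'S /forall_inP le_c'].
by apply: (@pos_inj s); apply/eqP; rewrite eqn_leq le_c ?le_c'.
Qed.

Lemma voters_disjoint S c c' : c != c' -> [disjoint voters S c & voters S c'].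
Proof.
move=> neq_cc'; rewrite -setI_eq0; apply/eqP/setP => s; rewrite !inE.
by apply/andP => -[/votes_for_uniq vc /vc eq_cc']; rewrite eq_cc' eqxx in neq_cc'.
Qed.

(* A voter for c lies on the arc running from d (excluded) to c. *)
Lemma votes_for_pos_lt S s c d : votes_for S s c -> d \in S -> d != c -> pos s c < pos d c.
Proof.
move=> /andP[_ /forall_inP le_c] dS neq_dc.
case: (ltngtP (pos s c) (pos s d)) => [lt|gt|/pos_inj eq_cd].
- by have := pos_add_wrap lt; have := pos_lt s d; lia.
- by have := le_c d dS; lia.
- by rewrite eq_cd eqxx in neq_dc.
Qed.

Lemma card_voters_le S c d : d \in S -> d != c -> #|voters S c| <= pos d c.
Proof.
move=> dS neq_dc; rewrite -(card_pos_lt c (ltnW (pos_lt d c))).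
by apply/subset_leq_card/fintype.subsetP => s; rewrite !inE => /votes_for_pos_lt; apply.
Qed.

Lemma card_voters_le_sub S c k : 0 < k <= c -> inord (c - k) \in S -> #|voters S c| <= k.
Proof.
move=> /andP[k_gt0 le_kc] dS; set d : 'I_n := inord (c - k).
have val_d : d = c - k :> nat.
  by rewrite inordK // (leq_ltn_trans (leq_subr k c)).
have pos_dc : pos d c = k by move: val_d; case: (posP d c) => *; lia.
rewrite -pos_dc; apply: card_voters_le dS _.
by rewrite -val_eqE /= val_d; apply/eqP; lia.
Qed.

Lemma card_voters_ge S c k : k <= n -> c \in S ->
  (forall d, d != c -> pos d c < k -> d \notin S) -> k <= #|voters S c|.
Proof.
move=> le_kn cS gap; rewrite -{1}(card_pos_lt c le_kn).
apply/subset_leq_card/fintype.subsetP => s; rewrite !inE => lt_k.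
rewrite /votes_for cS; apply/forall_inP => d dS; rewrite leqNgt; apply/negP => lt_dc.
have neq_dc : d != c by apply: contraTneq lt_dc => ->; rewrite ltnn.
apply: (negP (gap d neq_dc _) dS).
by have := pos_add (ltnW lt_dc); lia.
Qed.

End CyclicPosition.

Lemma sum_mem_card (R : realType) (T : finType) (P : {set T}) :
  (\sum_(s : T) (s \in P)%:R = #|P|%:R :> R)%R.
Proof.
rewrite -sum1_card natr_sum [RHS]big_mkcond.
by apply: eq_bigr => s _; case: (s \in P).
Qed.

Section ExponentialMoment.
Variables (R : realType) (T : finType) (m : nat).
Local Open Scope ring_scope.
Implicit Types (P Q : {set T}).

(* Exponential Markov inequality for the multinomial counts: weight each value by
   x on Q and by x^-1 on P, so that every tuple of the event has weight >= 1. *)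
Lemma card_hits_le_exp P Q (x : R) : 1 <= x -> [disjoint P & Q] ->
  #|[set f : {ffun 'I_m -> T} | (hits f P <= hits f Q)%N]|%:R
    <= (#|T|%:R - #|P|%:R * (1 - x^-1) + #|Q|%:R * (x - 1)) ^+ m.
Proof.
move=> x_ge1 disPQ; have x_gt0 : 0 < x by apply: lt_le_trans x_ge1.
pose w s : R := (if s \in Q then x else 1) * (if s \in P then x^-1 else 1).
have w_ge0 s : 0 <= w s.
  by rewrite mulr_ge0 //; case: ifP; rewrite ?invr_ge0 ?ltW.
have prod_w (f : {ffun 'I_m -> T}) : \prod_j w (f j) = x ^+ hits f Q * x^-1 ^+ hits f P.
  rewrite big_split /= -!big_mkcond /= -!prodr_const.
  by congr (_ * _); apply: eq_bigl => j; rewrite inE.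
have prod_w_ge1 (f : {ffun 'I_m -> T}) :
    (hits f P <= hits f Q)%N -> 1 <= \prod_j w (f j).
  move=> le_PQ; rewrite prod_w -(subnK le_PQ) exprD exprVn -mulrA.
  by rewrite mulfV ?expf_neq0 ?gt_eqF // mulr1 exprn_ege1.
have sum_w : \sum_s w s = #|T|%:R - #|P|%:R * (1 - x^-1) + #|Q|%:R * (x - 1).
  rewrite -!sum_mem_card -sumr_const !mulr_suml -sumrB -big_split /=.
  apply: eq_bigr => s _; rewrite /w; case: (boolP (s \in P)) => sP.
    by rewrite (disjointFr disPQ sP) /=; ring.
  by case: (s \in Q) => /=; ring.
have markov : #|[set f : {ffun 'I_m -> T} | (hits f P <= hits f Q)%N]|%:R
    <= \sum_(f : {ffun 'I_m -> T}) \prod_j w (f j).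
  rewrite -sum_mem_card; apply: ler_sum => f _; rewrite inE.
  by case: leqP => [/prod_w_ge1 //|_]; rewrite prodr_ge0.
apply: (le_trans markov).
by rewrite -(bigA_distr_bigA (fun (_ : 'I_m) (s : T) => w s)) prodr_const card_ord sum_w.
Qed.

(* With x = (2q + 2) / (2q + 1) the bound of [card_hits_le_exp] drops by 1 / (4q + 2). *)
Lemma card_hits_le P Q q : [disjoint P & Q] -> (q < #|P|)%N -> (#|Q| <= q)%N ->
  #|[set f : {ffun 'I_m -> T} | (hits f P <= hits f Q)%N]|%:R
    <= (#|T|%:R - (4 * q + 2)%:R^-1) ^+ m :> R.
Proof.
move=> disPQ lt_qP le_Qq.
have q_ge0 : 0 <= q%:R :> R by [].
pose a : R := 2 * q%:R + 1.
have a_gt0 : 0 < a by rewrite /a; lra.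
have x_ge1 : 1 <= (a + 1) / a by rewrite ler_pdivlMr // mul1r lerDl.
apply: le_trans (card_hits_le_exp x_ge1 disPQ) _.
have -> : (a + 1) / a - 1 = a^-1 by field; rewrite gt_eqF.
have -> : 1 - ((a + 1) / a)^-1 = (a + 1)^-1.
  by rewrite invf_div; field; rewrite gt_eqF //; lra.
have half : q.+1%:R * (a + 1)^-1 = 2^-1 by rewrite -natr1 /a; field; rewrite gt_eqF //; lra.
have gap : 2^-1 - q%:R * a^-1 = (4 * q + 2)%:R^-1.
  by rewrite natrD natrM /a; field; rewrite gt_eqF //; lra.
have inv_a_gt0 : 0 < a^-1 by rewrite invr_gt0.
have inv_a1_gt0 : 0 < (a + 1)^-1 by rewrite invr_gt0; lra.
have inv_a1_le1 : (a + 1)^-1 <= 1 by rewrite invf_le1; lra.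
have inv_gap_le1 : (4 * q + 2)%:R^-1 <= 1 :> R by rewrite invf_le1 // ler1n addn2.
have le_qP : q.+1%:R <= #|P|%:R :> R by rewrite ler_nat.
have le_PT : #|P|%:R <= #|T|%:R :> R by rewrite ler_nat max_card.
have le_P_half : q.+1%:R * (a + 1)^-1 <= #|P|%:R * (a + 1)^-1 by rewrite ler_wpM2r // ltW.
have le_Q_term : #|Q|%:R * a^-1 <= q%:R * a^-1 by rewrite ler_wpM2r ?ler_nat // ltW.
have le_P_term : #|P|%:R * (a + 1)^-1 <= #|P|%:R by rewrite ler_piMr // ltW.
have ge0_Q_term : 0 <= #|Q|%:R * a^-1 by rewrite mulr_ge0 // ltW.
apply: lerXn2r; rewrite ?nnegrE; lra.
Qed.

End ExponentialMoment.

Section TwoRound.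
Variables (R : realType) (n' m q : nat).
Local Notation n := n'.+1.
Local Open Scope ring_scope.

Definition upset (S : {set 'I_n}) (c c' : 'I_n) : {set {ffun 'I_m -> 'I_n}} :=
  [set f | (Xi f S c <= Xi f S c')%N].

Lemma card_upset_le (S : {set 'I_n}) (c c' : 'I_n) :
  c != c' -> (q < #|voters S c|)%N -> (#|voters S c'| <= q)%N ->
  #|upset S c c'|%:R <= (n%:R - (4 * q + 2)%:R^-1) ^+ m :> R.
Proof.
move=> neq_cc' lt_qc le_c'q.
have -> : upset S c c' = [set f | (hits f (voters S c) <= hits f (voters S c'))%N].
  by apply/setP => f; rewrite !inE !Xi_hits.
by have := card_hits_le R m (voters_disjoint S neq_cc') lt_qc le_c'q; rewrite card_ord.
Qed.

Variables (A B : {set 'I_n}) (a b : 'I_n).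
Definition loses : {set {ffun 'I_m -> 'I_n}} := [set f | ~~ wins_two_round f A B a].

Hypotheses (aA : a \in A) (bB : b \in B).
Hypotheses (lt_qa : (q < #|voters A a|)%N)
  (le_Aq : forall c, c \in A :\ a -> (#|voters A c| <= q)%N).
Hypotheses (lt_qb : (q < #|voters B b|)%N)
  (le_Bq : forall c, c \in B :\ b -> (#|voters B c| <= q)%N).
Hypotheses (lt_q_final : (q < #|voters [set a; b] a|)%N)
  (le_final_q : (#|voters [set a; b] b| <= q)%N).

Lemma loses_two_round_sub : loses \subset
  \bigcup_(c in A :\ a) upset A a c :|: \bigcup_(c in B :\ b) upset B b c
  :|: upset [set a; b] a b.
Proof.
apply/fintype.subsetP => f; rewrite !inE; apply: contraR.
rewrite !negb_or -ltnNge => /andP[/andP[noA noB] final].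
have win (S : {set 'I_n}) c : c \in S -> f \notin \bigcup_(c' in S :\ c) upset S c c' ->
    is_winner f S c.
  move=> cS no_upset; rewrite /is_winner cS; apply/forall_inP => c' c'S.
  apply/implyP => neq_c'c; rewrite ltnNge; apply: contra no_upset => le_cc'.
  by apply/bigcupP; exists c'; rewrite !inE ?neq_c'c ?c'S.
by apply/existsP; exists a; apply/existsP; exists b; rewrite !win // eqxx final.
Qed.

Lemma card_loses_two_round_le :
  #|loses|%:R <= (n + n + 1)%:R * (n%:R - (4 * q + 2)%:R^-1) ^+ m :> R.
Proof.
set r : R := _ ^+ m.
have r_ge0 : 0 <= r.
  rewrite exprn_ge0 // subr_ge0 (le_trans _ (ler1n R n)) // invf_le1 //.
  by rewrite ler1n addn2.
have sum_le (S : {set 'I_n}) c : (q < #|voters S c|)%N ->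
    (forall c', c' \in S :\ c -> (#|voters S c'| <= q)%N) ->
    \sum_(c' in S :\ c) #|upset S c c'|%:R <= n%:R * r.
  move=> lt_qc le_q; apply: (@le_trans _ _ (\sum_(c' in S :\ c) r)).
    apply: ler_sum => c' /[dup] /le_q le_c'q /setD1P[neq_c'c _].
    by apply: card_upset_le; rewrite // eq_sym.
  rewrite sumr_const -[r *+ _]mulr_natl ler_wpM2r // ler_nat.
  by rewrite -[X in (_ <= X)%N](card_ord n) max_card.
have neq_ab : a != b.
  by apply/eqP => eq_ab; move: lt_q_final le_final_q; rewrite eq_ab; lia.
have card_le : (#|loses| <=
    \sum_(c in A :\ a) #|upset A a c| + \sum_(c in B :\ b) #|upset B b c|
    + #|upset [set a; b] a b|)%N.
  apply: leq_trans (subset_leq_card loses_two_round_sub) _.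
  rewrite (leq_trans (leq_card_setU _ _)) // leq_add2r.
  by rewrite (leq_trans (leq_card_setU _ _)) // leq_add ?card_bigcup_le.
rewrite -(ler_nat R) in card_le; apply: le_trans card_le _.
rewrite !natrD !natr_sum !mulrDl mul1r.
by rewrite !lerD ?sum_le ?card_upset_le.
Qed.

End TwoRound.

Section LogRate.
Variable R : realType.
Local Open Scope ring_scope.

Lemma limn_esup_le_eventually (u : (\bar R)^nat) (c : \bar R) N :
  (forall k, (N <= k)%N -> (u k <= c)%E) -> (limn_esup u <= c)%E.
Proof.
move=> le_uc; rewrite limn_esup_lim; apply: lime_le; first exact: is_cvg_esups.
near=> k; apply: ge_ereal_sup => _ [j /= le_kj <-]; apply: le_uc.
by apply: leq_trans le_kj; near: k; exists N.
Unshelve. all: by end_near. Qed.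

Lemma limn_esup_elog_lt0 (u : nat -> R) (K r : R) : 0 < K -> 0 < r < 1 ->
  (forall m, 0 <= u m <= K * r ^+ m) ->
  (limn_esup (fun m => elog (u m) * (m%:R^-1)%:E) < 0)%E.
Proof.
move=> K_gt0 /andP[r_gt0 r_lt1] u_bound.
have ln_r_lt0 : ln r < 0 by rewrite ln_lt0 // r_gt0 r_lt1.
pose N := (Num.truncn (2 * ln K / - ln r)).+1.
apply: (le_lt_trans (@limn_esup_le_eventually _ (ln r / 2)%:E N _)).
  move=> k le_Nk; have /andP[u_ge0 u_le] := u_bound k.
  have k_gt0 : 0 < k%:R :> R by rewrite ltr0n (leq_trans _ le_Nk).
  have large_k : 2 * ln K < k%:R * - ln r.
    rewrite -ltr_pdivrMr ?oppr_gt0 //.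
    by apply: lt_le_trans (truncnS_gt _) _; rewrite ler_nat.
  rewrite /elog; case: eqP => [_|u_neq0].
    by rewrite gt0_mulNye ?lte_fin ?invr_gt0 // leNye.
  have u_gt0 : 0 < u k by rewrite lt_neqAle eq_sym u_ge0 andbT; apply/eqP.
  have ln_u_le : ln (u k) <= ln K + k%:R * ln r.
    rewrite mulr_natl -lnXn // -lnM ?posrE ?exprn_gt0 //.
    by rewrite ler_ln ?posrE ?mulr_gt0 ?exprn_gt0.
  by rewrite -EFinM lee_fin ler_pdivrMr //; lra.
by rewrite lte_fin; lra.
Qed.

End LogRate.

Section LossProbability.
Variable R : realType.
Local Open Scope ring_scope.

Lemma one_sub_p1 n' m l :
  1 - p1 R n'.+1 m l = #|loses m (Aset n'.+1 l) (Bset n'.+1 l) ord0|%:R / (n'.+1 ^ m)%:R.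
Proof.
set N := n'.+1; set L := loses _ _ _ _.
set W := [set f : {ffun 'I_m -> 'I_N} | wins_two_round f (Aset N l) (Bset N l) ord0].
have card_WL : (#|W| + #|L| = N ^ m)%N.
  have -> : L = ~: W by apply/setP => f; rewrite !inE.
  by rewrite cardsC card_ffun !card_ord.
have N_gt0 : 0 < (N ^ m)%:R :> R by rewrite ltr0n expn_gt0.
rewrite /p1 /= -/N -/W -card_WL natrD in N_gt0 *.
by field; rewrite gt_eqF.
Qed.

End LossProbability.


Section Partition.
Variables (n' h l : nat).
Local Notation n := n'.+1.
Hypotheses (n_eq : n = 2 * h) (l_ge2 : 2 <= l) (l_lt_h : l < h).
Local Notation A := (Aset n l).
Local Notation B := (Bset n l).
(* candidate l+1, the intended winner of B *)
Local Notation lB := (inord l : 'I_n).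

Lemma mem_Aset (c : 'I_n) : c \in A <->
  c < l \/ exists i, [/\ 1 <= i, i <= h - l & c.+1 = l + 2 * i].
Proof.
rewrite inE (_ : (n - 2 * l)./2 = h - l); last by rewrite n_eq -mulnBr mul2n doubleK.
split => [/orP[lt_cl|/existsP[i /and3P[i_ge1 le_i /eqP eq_c]]]|[lt_cl|[i [i_ge1 le_i eq_c]]]].
- by left.
- by right; exists i.
- by rewrite lt_cl.
- apply/orP; right; apply/existsP; exists (inord i).
  by rewrite inordK ?i_ge1 ?le_i ?eq_c //; lia.
Qed.

Lemma val_lB : lB = l :> nat.
Proof. by rewrite inordK //; lia. Qed.

Lemma ord0_Aset : ord0 \in A.
Proof. by apply/mem_Aset; left => /=; lia. Qed.

Lemma lB_Bset : lB \in B.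
Proof. by rewrite finset.in_setC; apply/negP => /mem_Aset; rewrite val_lB => -[|[i []]]; lia. Qed.

Lemma card_voters_Aset_ord0 : l < #|voters A ord0|.
Proof.
apply: card_voters_ge ord0_Aset _ => [|d /ord_gt0 d_gt0]; first lia.
apply: contraTN => /mem_Aset dA; have := ltn_ord d.
by case: (posP d ord0) => /=; case: dA => [|[i []]]; lia.
Qed.

Lemma card_voters_Aset (c : 'I_n) : c \in A :\ ord0 -> #|voters A c| <= l.
Proof.
case/setD1P => /ord_gt0 c_gt0 /mem_Aset [lt_cl|[i [i_ge1 le_i eq_c]]].
  apply: leq_trans (card_voters_le_sub (k := 1) _ _) _; first by rewrite c_gt0.
  - by apply/mem_Aset; left; rewrite inordK; lia.
  - by lia.
apply: leq_trans (card_voters_le_sub (k := 2) _ _) _; [lia | | by []].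
apply/mem_Aset; rewrite inordK; last lia.
case: (ltnP 1 i) => [lt_1i|le_i1]; last by left; lia.
by right; exists i.-1; split; lia.
Qed.

Lemma val_neq_lB (d : 'I_n) : d != lB -> d <> l :> nat.
Proof. by move=> neq_dl eq_dl; rewrite -val_lB in eq_dl; rewrite (val_inj eq_dl) eqxx in neq_dl. Qed.

Lemma card_voters_Bset_lB : l < #|voters B lB|.
Proof.
apply: card_voters_ge lB_Bset _ => [|d /val_neq_lB neq_dl]; first lia.
rewrite finset.in_setC negbK => lt_dl; apply/mem_Aset; left.
by move: lt_dl; have := ltn_ord d; case: (posP d lB); rewrite val_lB; lia.
Qed.

Lemma card_voters_Bset (c : 'I_n) : c \in B :\ lB -> #|voters B c| <= l.
Proof.
case/setD1P => /val_neq_lB neq_cl; rewrite finset.in_setC => /negP cA.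
have le_lc : l <= c by rewrite leqNgt; apply/negP => lt_cl; apply: cA; apply/mem_Aset; left.
have c_notA i : 1 <= i -> i <= h - l -> c.+1 <> l + 2 * i.
  by move=> i_ge1 le_i eq_c; apply: cA; apply/mem_Aset; right; exists i.
have inB k : k <= c -> ~ (c - k < l \/ exists i,
    [/\ 1 <= i, i <= h - l & (c - k).+1 = l + 2 * i]) -> inord (c - k) \in B.
  move=> le_kc notA; rewrite finset.in_setC; apply/negP => /mem_Aset.
  by rewrite inordK //; have := ltn_ord c; lia.
case: (ltnP (n - l) c) => [lt_c|le_c].
  have c1B : inord (c - 1) \in B by apply: inB => [|[lt_c1|[i [i_ge1 le_i eq_c]]]]; lia.
  by apply: leq_trans (card_voters_le_sub _ c1B) _; lia.
have neq_c_l1 := c_notA 1 isT.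
have c2B : inord (c - 2) \in B.
  apply: inB => [|[lt_c2|[i [i_ge1 le_i eq_c]]]]; try lia.
  by apply: (c_notA i.+1); lia.
by apply: leq_trans (card_voters_le_sub _ c2B) _; lia.
Qed.

Lemma card_voters_final_ord0 : l < #|voters [set ord0; lB] ord0|.
Proof.
apply: (@leq_trans (n - l)); first lia.
apply: card_voters_ge => [||d /ord_gt0 d_gt0]; [lia | by rewrite !inE eqxx |].
move=> lt_d; rewrite !inE negb_or; apply/andP; split.
  by apply: contraTneq d_gt0 => ->.
apply: contraTneq lt_d => ->; rewrite -leqNgt.
by case: (posP lB ord0); rewrite val_lB /=; lia.
Qed.

Lemma card_voters_final_lB : #|voters [set ord0; lB] lB| <= l.
Proof.
apply: card_voters_le_sub; first by rewrite val_lB; lia.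
by rewrite val_lB subnn !inE; apply/orP; left; apply/eqP/val_inj; rewrite /= inordK.
Qed.


Section Probability.
Variable R : realType.
Local Open Scope ring_scope.

Lemma one_sub_p1_le m :
  0 <= 1 - p1 R n m l <= (n + n + 1)%:R * (1 - (n * (4 * l + 2))%:R^-1) ^+ m.
Proof.
rewrite one_sub_p1 divr_ge0 //=.
have := card_loses_two_round_le R m ord0_Aset lB_Bset
  card_voters_Aset_ord0 card_voters_Aset card_voters_Bset_lB card_voters_Bset
  card_voters_final_ord0 card_voters_final_lB.
have N_gt0 : 0 < n%:R :> R by rewrite ltr0n.
have -> : 1 - (n * (4 * l + 2))%:R^-1 = (n%:R - (4 * l + 2)%:R^-1) / n%:R :> R.
  by rewrite natrM; field; rewrite ?gt_eqF // ltr0n addn2.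
rewrite expr_div_n natrX mulrA => le_loses.
by rewrite ler_pdivrMr ?exprn_gt0 // divfK ?expf_neq0 ?gt_eqF.
Qed.

End Probability.

End Partition.

Theorem mainTheorem6 (R : realType) (n l : nat) :
  6 <= n -> ~~ odd n -> 2 <= l -> l <= n./2 - 1 ->
  (limn_esup (fun m : nat =>
     (elog (1 - p1 R n m l) * (m%:R^-1)%:E)%E) < 0)%E.
Proof.
case: n => [//|n'] _ n_even l_ge2 l_le.
set h := n'.+1./2.
have n_eq : n'.+1 = 2 * h.
  by have := odd_double_half n'.+1; rewrite (negbTE n_even) -muln2; lia.
have l_lt_h : l < h by lia.
have rate_gt0 : (0 < (n'.+1 * (4 * l + 2))%:R^-1 :> R)%R by rewrite invr_gt0 ltr0n muln_gt0 addn2.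
have rate_lt1 : ((n'.+1 * (4 * l + 2))%:R^-1 < 1 :> R)%R.
  by rewrite invf_lt1 ?ltr0n ?ltr1n ?muln_gt0 ?addn2 //; lia.
apply: (limn_esup_elog_lt0 _ _ (one_sub_p1_le n_eq l_ge2 l_lt_h R)).
  by rewrite ltr0n addn1.
move: ((n'.+1 * (4 * l + 2))%:R^-1 : R)%R rate_gt0 rate_lt1 => r r_gt0 r_lt1.
by apply/andP; split; lra.
Qed.
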